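(* For every integer $m\geq 0$, $\Lambda_m\subseteq S_m$.
   Context: $\mathbb{N}=\{1,2,3,\dots\}$, $\mathbb{N}_0=\mathbb{N}\cup\{0\}$. The Collatz map $T:\mathbb{N}\to\mathbb{N}$ is $T(n)=\frac{3n+1}{2}$ if $n$ is odd and $T(n)=\frac{n}{2}$ if $n$ is even; $T^{(k)}$ denotes the $k$-fold composition. The total stopping time is $\sigma_\infty(1)=0$ and, for $n\geq 2$, $\sigma_\infty(n)=\inf\{k\in\mathbb{N}\cup\{\infty\} : T^{(k)}(n)=1\}$. Let $S_0=\{1\}$ and $S_k=\{n\in\mathbb{N}:\sigma_\infty(n)=k\}$ for $k\geq 1$. For $0\leq m\leq 3$ let $\Lambda_m=\{2^m\}$, and for $m\geq 4$ let $\Lambda_m$ be the set of all $n\in\mathbb{N}$ that can be written as $n=\frac{2^m}{3^l}-\sum_{k=1}^{l}\frac{2^{b_k}}{3^k}$ for some integers $l,b_1,\dots,b_l\in\mathbb{N}_0$ with $0\leq l\leq m-3$ and $0\leq b_1<b_2<\cdots<b_l\leq m-4$. *)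

From mathcomp Require Import all_boot all_order all_algebra.
Set Implicit Arguments. Unset Strict Implicit. Unset Printing Implicit Defensive.
Import Order.TTheory GRing.Theory Num.Theory.

Definition collatzT (n : nat) : nat :=
  if odd n then (3 * n + 1)./2 else n./2.

Definition sigma_inf_is (n k : nat) : Prop :=
  (n = 1%N /\ k = 0%N) \/
  [/\ (2 <= n)%N, (1 <= k)%N, iter k collatzT n = 1%N &
      forall j : nat, (1 <= j < k)%N -> iter j collatzT n <> 1%N].

Definition in_S (k n : nat) : Prop := (0 < n)%N /\ sigma_inf_is n k.

Definition in_Lambda (m n : nat) : Prop :=
  if (m <= 3)%N then n = (2 ^ m)%N
  else (0 < n)%N /\
       exists (l : nat) (b : nat -> nat),
         [/\ (l <= m - 3)%N,
             (forall k : nat, (1 <= k < l)%N -> (b k < b k.+1)%N),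
             (forall k : nat, (1 <= k <= l)%N -> (b k <= m - 4)%N) &
             (n%:R : rat) = (2 ^ m)%:R / (3 ^ l)%:R
                            - \sum_(1 <= k < l.+1) (2 ^ b k)%:R / (3 ^ k)%:R]%R.

From mathcomp Require Import all_boot all_order all_algebra.
From mathcomp Require Import zify.
Import GRing.Theory Num.Theory.

Set Implicit Arguments.
Unset Strict Implicit.
Unset Printing Implicit Defensive.

(* Clearing denominators, n \in Lambda_m reads n 3^l + sum_k 2^(b_k) 3^(l-k) = 2^m.
   If every b_k is positive, n is even and T(n) = n/2 satisfies the same kind of
   equation with all exponents lowered by one; if b_1 = 0, n is odd and
   T(n) = (3n+1)/2 satisfies one with the first term dropped.  After m - 3 such
   steps the sum is empty and T^(m-3)(n) = 8, so T^m(n) = 1; no earlier iterate is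
   1, since the orbit of 1 is {1, 2} and would never reach 8. *)

Definition collatz_weight (l : nat) (b : nat -> nat) : nat :=
  \sum_(1 <= k < l.+1) 2 ^ b k * 3 ^ (l - k).

(* The exponents of 2 decrease by one at each Collatz step, whence the bound
   [b k < N]: the invariant forces [iter N collatzT n = c]. *)
Definition collatz_certificate (N c n l : nat) (b : nat -> nat) : Prop :=
  [/\ forall k, 1 <= k < l -> b k < b k.+1,
      forall k, 1 <= k <= l -> b k < N &
      n * 3 ^ l + collatz_weight l b = 2 ^ N * c].

Lemma collatz_weight_halve l b : (forall k, 1 <= k <= l -> 0 < b k) ->
  collatz_weight l b = 2 * collatz_weight l (fun k => b k - 1).
Proof.
move=> b_gt0; rewrite /collatz_weight big_distrr /=; apply: eq_big_nat => k hk.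
by rewrite mulnA -expnS subn1 prednK ?b_gt0.
Qed.

Lemma collatz_weight_recl l b : b 1 = 0 -> (forall k, 2 <= k <= l.+1 -> 0 < b k) ->
  collatz_weight l.+1 b = 3 ^ l + 2 * collatz_weight l (fun k => b k.+1 - 1).
Proof.
move=> b1 b_gt0; rewrite /collatz_weight big_nat_recl // b1 subSS subn0 mul1n.
congr (_ + _); rewrite big_distrr /=; apply: eq_big_nat => k /andP[k_gt0 k_le].
by rewrite subSS mulnA -expnS subn1 prednK // b_gt0 // ltnS k_gt0.
Qed.

Lemma incr_lower_bound l (b : nat -> nat) k :
  (forall i, 1 <= i < l -> b i < b i.+1) -> 1 <= k <= l -> b 1 + (k - 1) <= b k.
Proof.
move=> incr; elim: k => [|[|k] IH] hk //; first by rewrite addn0.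
by have := incr k.+1 ltac:(lia); have := IH ltac:(lia); lia.
Qed.

Lemma certificate_even N c n l b :
  collatz_certificate N.+1 c n l b -> (forall k, 1 <= k <= l -> 0 < b k) ->
  collatz_certificate N c (collatzT n) l (fun k => b k - 1).
Proof.
move=> [incr bound cert_eq] b_gt0; rewrite collatz_weight_halve // in cert_eq.
have n_even : ~~ odd n.
  by move: (congr1 odd cert_eq); rewrite oddD !oddM !oddX orbT andbT addbF => ->.
have n_half : n = 2 * collatzT n.
  by rewrite /collatzT (negbTE n_even) -{1}[n]odd_double_half (negbTE n_even) mul2n.
split=> [k hk | k hk |].
- by have := incr k hk; have := b_gt0 k ltac:(lia); lia.
- by have := bound k hk; have := b_gt0 k hk; lia.
- apply/eqP; rewrite -(eqn_pmul2l (_ : 0 < 2)) //; apply/eqP.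
  by rewrite mulnDr mulnA -n_half cert_eq expnS mulnA.
Qed.

Lemma certificate_odd N c n l b :
  collatz_certificate N.+1 c n l.+1 b -> b 1 = 0 ->
  collatz_certificate N c (collatzT n) l (fun k => b k.+1 - 1).
Proof.
move=> [incr bound cert_eq] b1.
have b_gt0 k : 2 <= k <= l.+1 -> 0 < b k.
  by move=> hk; have := incr_lower_bound incr (_ : 1 <= k <= l.+1); rewrite b1; lia.
rewrite collatz_weight_recl // in cert_eq.
have {cert_eq} eq3 :
    3 ^ l * (3 * n + 1) + 2 * collatz_weight l (fun k => b k.+1 - 1) = 2 ^ N.+1 * c.
  by rewrite -cert_eq expnS; lia.
have n_odd : odd n.
  move: (congr1 odd eq3); rewrite oddD !oddM !oddX orbT /= addbF oddD oddM /=.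
  by case: (odd n).
have n_half : 3 * n + 1 = 2 * collatzT n.
  by rewrite /collatzT n_odd -{1}[3 * n + 1]odd_double_half oddD oddM n_odd mul2n.
split=> [k hk | k hk |].
- by have := incr k.+1 ltac:(lia); have := b_gt0 k.+1 ltac:(lia); lia.
- by have := bound k.+1 ltac:(lia); have := b_gt0 k.+1 ltac:(lia); lia.
- apply/eqP; rewrite -(eqn_pmul2l (_ : 0 < 2)) //; apply/eqP.
  by rewrite mulnDr mulnA -n_half [_ * 3 ^ l]mulnC eq3 expnS mulnA.
Qed.

Lemma certificate_step N c n l b :
  collatz_certificate N.+1 c n l b ->
  exists l' b', collatz_certificate N c (collatzT n) l' b'.
Proof.
move=> cert; have [incr _ _] := cert.
case: l b cert incr => [|l] b cert incr.
  by exists 0, (fun k => b k - 1); apply: certificate_even cert _ => k; lia.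
case b1: (b 1) => [|b1'].
  by exists l, (fun k => b k.+1 - 1); apply: certificate_odd.
exists l.+1, (fun k => b k - 1); apply: certificate_even cert _ => k hk.
by have := incr_lower_bound incr hk; rewrite b1; lia.
Qed.

Lemma certificate_iter N c n l b :
  collatz_certificate N c n l b -> iter N collatzT n = c.
Proof.
elim: N n l b => [|N IH] n l b cert.
  case: l cert => [|l] [_ bound cert_eq]; last by have := bound 1 ltac:(lia).
  by move: cert_eq; rewrite /collatz_weight big_geq // expn0 muln1 mul1n addn0.
have [l' [b' cert']] := certificate_step cert.
by rewrite iterSr (IH _ _ _ cert').
Qed.

Lemma Lambda_eq_nat m n l (b : nat -> nat) :
  (n%:R : rat) = ((2 ^ m)%:R / (3 ^ l)%:R
     - \sum_(1 <= k < l.+1) (2 ^ b k)%:R / (3 ^ k)%:R)%R ->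
  n * 3 ^ l + collatz_weight l b = 2 ^ m.
Proof.
move=> def_n; apply/eqP; rewrite -(eqr_nat rat) natrD natrM; apply/eqP.
have pow3_neq0 k : ((3 ^ k)%:R : rat) != 0%R by rewrite pnatr_eq0 expn_eq0.
have -> : ((collatz_weight l b)%:R : rat) =
    (\sum_(1 <= k < l.+1) (2 ^ b k)%:R / (3 ^ k)%:R * (3 ^ l)%:R)%R.
  rewrite /collatz_weight natr_sum; apply: eq_big_nat => k /andP[_ k_le] /=.
  by rewrite -[in RHS](subnKC (k_le : k <= l)) expnD !natrM mulrA divfK.
by rewrite -big_distrl /= def_n mulrBl divfK // subrK.
Qed.

Lemma iter_collatzT_1 j : iter j collatzT 1 = if odd j then 2 else 1.
Proof. by elim: j => [|j IH] //; rewrite iterS IH /=; case: (odd j). Qed.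

Lemma iter_collatzT_pow2 q j : j <= q -> iter j collatzT (2 ^ q) = 2 ^ (q - j).
Proof.
elim: j => [|j IH] j_lt; first by rewrite subn0.
rewrite iterS IH 1?ltnW // -(subnSK j_lt) expnS /collatzT mul2n odd_double.
by rewrite doubleK.
Qed.

(* The target must be at least 4: the value 2 is also reached from 1. *)
Lemma sigma_inf_is_pow2 N n p : 0 < n ->
  iter N collatzT n = 2 ^ p.+2 -> sigma_inf_is n (N + p.+2).
Proof.
move=> n_gt0 itN.
have never1 j : j <= N -> iter j collatzT n <> 1.
  move=> j_le it1; move: itN; rewrite -(subnK j_le) iterD it1 iter_collatzT_1.
  by case: odd; rewrite !expnS; lia.
have n_ge2 : 2 <= n by have := never1 0 (leq0n N); rewrite /=; lia.
have itNj j : j <= p.+2 -> iter (N + j) collatzT n = 2 ^ (p.+2 - j).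
  by move=> j_le; rewrite addnC iterD itN iter_collatzT_pow2.
right; split=> //; first by rewrite addnS.
  by rewrite itNj // subnn.
move=> j /andP[_ j_lt]; case: (leqP j N) => [/never1 // | N_lt].
rewrite -(subnKC (ltnW N_lt)) itNj; last by rewrite -(leq_add2l N) subnKC ltnW.
by move/eqP; rewrite -(expn0 2) eqn_exp2l //; lia.
Qed.

Theorem mainTheorem2 : forall (m n : nat), in_Lambda m n -> in_S m n.
Proof.
move=> m n; rewrite /in_Lambda /in_S; case: ifP => [m_le3 -> | /negbT].
  split; first by rewrite expn_gt0.
  case: m m_le3 => [_ | [_ | p _]]; first by left.
    by right; split=> // j; lia.
  by apply: (@sigma_inf_is_pow2 0); rewrite ?expn_gt0.
rewrite -ltnNge => m_gt3 [n_gt0 [l [b [_ incr bound def_n]]]]; split=> //.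
have cert : collatz_certificate (m - 3) 8 n l b.
  split=> // [k /bound | ]; first by lia.
  by rewrite (Lambda_eq_nat def_n) -[8]/(2 ^ 3) -expnD subnK // ltnW.
have := sigma_inf_is_pow2 n_gt0 (certificate_iter cert : _ = 2 ^ 1.+2).
by rewrite subnK // ltnW.
Qed.
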